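(* Let $t>0$. There exists a sequence $(t_n)$ with $t_n\to t$ such that for all $u,v\in\mathcal D$: if $(q_n^{(u,v)})$ converges in $(\mathcal D,d)$, then $\lim_n \Delta q_n^{(u,v)}(t_n)=\Delta\big(\lim_n q_n^{(u,v)}\big)(t)$.
   Context: Let $\pi=(\pi_n)_{n\ge1}$ be a sequence of partitions $\pi_n=(t^n_0,\dots,t^n_{k_n})$ with $0=t^n_0<\dots<t^n_{k_n}<\infty$, $t^n_{k_n}\uparrow\infty$, and mesh tending to $0$ on compacts; sums over $i$ run over $0\le i<k_n$. $\mathcal D$ is the space of càdlàg functions $[0,\infty)\to\mathbb R$ with a metric $d$ inducing the Skorokhod $J_1$ topology. For $f\in\mathcal D$, $\Delta f(s)=f(s)-f(s-)$. For $u,v\in\mathcal D$: $q_n^{(u,v)}(s)=\sum_{i:\,t^n_i\le s}(u(t^n_{i+1})-u(t^n_i))(v(t^n_{i+1})-v(t^n_i))$. *)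

From HB Require Import structures.
From mathcomp Require Import all_boot all_order all_algebra.
From mathcomp Require Import all_classical all_reals all_analysis.
Set Implicit Arguments. Unset Strict Implicit. Unset Printing Implicit Defensive.
Import Order.TTheory GRing.Theory Num.Theory.
Import numFieldNormedType.Exports.
Local Open Scope classical_set_scope.
Local Open Scope ring_scope.

(* A sequence of partitions: pi_n = (p n 0, ..., p n (k n)). *)
Definition partition_seq (R : realType) (k : nat -> nat) (p : nat -> nat -> R) : Prop :=
  [/\ (forall n, p n 0%N = 0),
      (forall n i, (i < k n)%N -> p n i < p n i.+1),
      (forall n, p n (k n) <= p n.+1 (k n.+1)),
      ((fun n => p n (k n)) @ \oo --> +oo) &
      (* mesh tends to 0 on compacts *)
      (forall T eps : R, 0 < eps -> \forall n \near \oo,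
          forall i, (i < k n)%N -> p n i <= T -> p n i.+1 - p n i <= eps)].

Definition cadlag (R : realType) (f : R -> R) : Prop :=
  (forall s, 0 <= s -> f x @[x --> s^'+] --> f s) /\
  (forall s, 0 < s -> cvg (f x @[x --> s^'-])).

(* left limit and jump; convention f(0-) = f(0), so the jump at s <= 0 is 0 *)
Definition leftlim (R : realType) (f : R -> R) (s : R) : R := lim (f x @[x --> s^'-]).
Definition jump (R : realType) (f : R -> R) (s : R) : R :=
  if 0 < s then f s - leftlim f s else 0.

Definition timechange (R : realType) (lam : R -> R) : Prop :=
  [/\ lam 0 = 0,
      (forall s r, 0 <= s -> s < r -> lam s < lam r),
      {within `[0, +oo[, continuous lam} &
      (forall M, exists s, 0 <= s /\ M <= lam s)].

(* Convergence in the Skorokhod J1 topology on D[0,oo)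
   (Jacod-Shiryaev VI.1.14 characterization). *)
Definition J1cvg (R : realType) (f : nat -> R -> R) (g : R -> R) : Prop :=
  exists lam : nat -> R -> R,
    [/\ (forall n, timechange (lam n)),
        (forall eps : R, 0 < eps -> \forall n \near \oo,
            forall s, 0 <= s -> `|lam n s - s| <= eps) &
        (forall (N : nat) (eps : R), 0 < eps -> \forall n \near \oo,
            forall s, 0 <= s -> s <= N%:R -> `|f n (lam n s) - g s| <= eps)].

Definition qn (R : realType) (k : nat -> nat) (p : nat -> nat -> R)
    (u v : R -> R) (n : nat) (s : R) : R :=
  \sum_(0 <= i < k n | p n i <= s)
     (u (p n i.+1) - u (p n i)) * (v (p n i.+1) - v (p n i)).

(* Let t_n be the left end point of the interval of pi_n that contains t; the
   mesh condition gives t_n -> t, and the jump of q_n at t_n is the single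
   increment over that interval.  Along the J1 time changes lam_n, the jump of q
   at any s is close to the jump of q_n at lam_n s.  If lam_n t = t_n we are done.
   Otherwise the jump of q_n at lam_n t is an increment over an interval lying on
   one side of t, where u and v are nearly constant, so the jump of q at t is
   small; and t_n = lam_n a for some a <> t close to t, where q has only a small
   jump, so the increment at t_n is small too. *)

From HB Require Import structures.
From mathcomp Require Import all_boot all_order all_algebra.
From mathcomp Require Import all_classical all_reals all_analysis.
From mathcomp Require Import lra.
Import Order.TTheory GRing.Theory Num.Theory.
Import numFieldNormedType.Exports.
Local Open Scope classical_set_scope.
Local Open Scope ring_scope.
Set Implicit Arguments. Unset Strict Implicit.

Section Partition.
Variables (R : realType) (k : nat -> nat) (p : nat -> nat -> R).
Hypothesis hp : partition_seq k p.

Lemma partition_lt n i j : (i < j)%N -> (j <= k n)%N -> p n i < p n j.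
Proof.
case: hp => _ hinc _ _ _; elim: j => // j IH.
rewrite ltnS leq_eqVlt => /orP[/eqP-> hj|hij hj]; first exact: hinc.
exact: lt_trans (IH hij (ltnW hj)) (hinc _ _ hj).
Qed.

Lemma partition_le n i j : (i <= j)%N -> (j <= k n)%N -> p n i <= p n j.
Proof.
rewrite leq_eqVlt => /orP[/eqP->|hij] hj; first exact: lexx.
exact/ltW/partition_lt.
Qed.

Lemma partition_inj n i j : (i <= k n)%N -> (j <= k n)%N -> p n i = p n j -> i = j.
Proof.
move=> hi hj hij; case: (ltngtP i j) => // h.
  by have := partition_lt h hj; rewrite hij ltxx.
by have := partition_lt h hi; rewrite hij ltxx.
Qed.

Definition straddles (t : R) n i := (i < k n)%N /\ p n i < t <= p n i.+1.

Lemma straddle_index t : 0 < t ->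
  exists idx : nat -> nat, forall n, t <= p n (k n) -> straddles t n (idx n).
Proof.
case: hp => hp0 _ _ _ _ t0.
suff /choice[idx hidx] : forall n, exists i, t <= p n (k n) -> straddles t n i.
  by exists idx.
move=> n; case: (pselect (t <= p n (k n))) => [htk|hn]; last by exists 0%N => /hn.
suff [i hi hti] : exists2 i, (i < k n)%N & p n i < t <= p n i.+1 by exists i.
elim: (k n) htk => [|m IH] htm; first by move: (lt_le_trans t0 htm); rewrite hp0 ltxx.
case: (leP t (p n m)) => htm'; last by exists m; rewrite ?htm' ?htm.
by have [i hi hti] := IH htm'; exists i => //; exact: ltnW.
Qed.

Lemma straddle_cvg t (idx : nat -> nat) :
  (forall n, t <= p n (k n) -> straddles t n (idx n)) -> p n (idx n) @[n --> \oo] --> t.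
Proof.
case: hp => _ _ _ /cvgryPge hinf hmesh hidx.
apply/cvgrPdist_le => eps eps0; near=> n.
have htk : t <= p n (k n) by near: n; exact: hinf t.
have [hi /andP[hit hti]] := hidx n htk.
have : p n (idx n).+1 - p n (idx n) <= eps.
  by move: (idx n) hi (ltW hit); near: n; exact: hmesh t eps eps0.
by rewrite ler_distl; lra.
Unshelve. all: end_near.
Qed.
End Partition.

Lemma nbhs_left_gt_finite (R : realType) (f : nat -> R) (x : R) m :
  \forall z \near x^'-, forall j, (j < m)%N -> f j < x -> f j < z.
Proof.
elim: m => [|m IH]; first exact: nearW.
have hm : \forall z \near x^'-, f m < x -> f m < z.
  case: (ltP (f m) x) => [hm|]; last by move=> _; apply: nearW.
  by near=> z => _; near: z; exact: nbhs_left_gt.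
apply: filterS2 IH hm => z hIH hm j.
by rewrite ltnS leq_eqVlt => /orP[/eqP->|/hIH].
Unshelve. all: end_near.
Qed.

Section Covariation.
Variables (R : realType) (k : nat -> nat) (p : nat -> nat -> R).
Variables u v : R -> R.

Definition incr n j := (u (p n j.+1) - u (p n j)) * (v (p n j.+1) - v (p n j)).

Definition atom n x := \sum_(0 <= j < k n | p n j == x) incr n j.

Lemma qnB_atom n x z : (forall j, (j < k n)%N -> p n j < x -> p n j < z) -> z < x ->
  qn k p u v n x - qn k p u v n z = atom n x.
Proof.
move=> hz zx; apply/eqP; rewrite subr_eq /qn /atom big_mkcond.
rewrite [X in X + _]big_mkcond [X in _ + X]big_mkcond -big_split /=; apply/eqP.
rewrite big_nat_cond [RHS]big_nat_cond; apply: eq_bigr => j /andP[/andP[_ hj] _].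
case: (ltgtP (p n j) x) => [hjx|hjx|hjx].
- by rewrite (ltW (hz j hj hjx)) add0r.
- by rewrite leNgt (lt_trans zx hjx) add0r.
- by rewrite (leNgt _ z) hjx zx addr0 /incr hjx.
Qed.

Lemma qn_left_cst n x :
  \forall z \near x^'-, qn k p u v n z = qn k p u v n x - atom n x.
Proof.
near=> z; have zx : z < x by near: z; exact: nbhs_left_lt.
have hz : forall j, (j < k n)%N -> p n j < x -> p n j < z.
  by near: z; exact: nbhs_left_gt_finite.
by rewrite -(qnB_atom hz zx) opprB addrC subrK.
Unshelve. all: end_near.
Qed.

Lemma cvg_qn_left n x : cvg (qn k p u v n z @[z --> x^'-]).
Proof. by apply: cvgP; apply: cvg_near_cst; exact: qn_left_cst. Qed.

Lemma jump_qn n x : 0 < x -> jump (qn k p u v n) x = atom n x.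
Proof.
move=> x0; rewrite /jump x0 /leftlim.
by rewrite (lim_near_cst (@norm_hausdorff R R^o) (qn_left_cst n x)) opprB addrC subrK.
Qed.

Lemma atom_eq0 n x : (forall j, (j < k n)%N -> p n j != x) -> atom n x = 0.
Proof. by move=> hx; rewrite /atom big_nat_cond big1 // => j /andP[/andP[_ /hx/negbTE->]]. Qed.

Hypothesis hp : partition_seq k p.

Lemma atom_partition n i : (i < k n)%N -> atom n (p n i) = incr n i.
Proof.
move=> hi; rewrite /atom big_mkord (bigD1 (Ordinal hi)) //= big1 ?addr0 //.
move=> j /andP[/eqP hji /negP[]]; apply/eqP/val_inj.
by apply: (partition_inj hp) hji; rewrite ltnW.
Qed.
End Covariation.

Section CadlagJumps.
Variable R : realType.
Implicit Types (f q lam : R -> R) (t d e s : R).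

Definition flat_sides f t d e :=
  (forall x, t - d < x -> x < t -> `|f x - leftlim f t| <= e) /\
  (forall x, t <= x -> x < t + d -> `|f x - f t| <= e).

Lemma cadlag_flat_sides f t e : cadlag f -> 0 < t -> 0 < e ->
  \forall d \near 0^'+, flat_sides f t d e.
Proof.
case=> hr hl t0 e0.
have /cvgrPdist_le/(_ e e0) := hr t (ltW t0).
rewrite near_withinE => /nbhs_ballP[d1 /= d10 h1].
have /cvgrPdist_le/(_ e e0) := hl t t0.
rewrite near_withinE => /nbhs_ballP[d2 /= d20 h2].
near=> d; have d0 : 0 < d by near: d; exact: nbhs_right_gt.
have dd1 : d < d1 by near: d; exact: nbhs_right_lt.
have dd2 : d < d2 by near: d; exact: nbhs_right_lt.
split=> x hx1 hx2; rewrite distrC.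
  by apply: h2 => //; rewrite /ball /= ltr_distl; apply/andP; split; lra.
move: hx1; rewrite le_eqVlt => /orP[/eqP<-|hx1]; first by rewrite subrr normr0 ltW.
by apply: h1 => //; rewrite /ball /= ltr_distl; apply/andP; split; lra.
Unshelve. all: end_near.
Qed.

Lemma flat_sides_incr_le f t d e a b : flat_sides f t d e -> a <= b ->
  (t - d < a /\ b < t) \/ (t <= a /\ b < t + d) -> `|f b - f a| <= e + e.
Proof.
case=> hl hr ab [[ha hb]|[ha hb]].
- have := hl a ha (le_lt_trans ab hb); have := hl b (lt_le_trans ha ab) hb.
  rewrite !ler_distl => /andP[? ?] /andP[? ?]; apply/andP; split; lra.
- have := hr a ha (le_lt_trans ab hb); have := hr b (le_trans ha ab) hb.
  rewrite !ler_distl => /andP[? ?] /andP[? ?]; apply/andP; split; lra.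
Qed.

Lemma jump_le_left_osc f s lo c e : cadlag f -> 0 < e -> 0 < s -> lo < s ->
  (forall r, lo < r -> r <= s -> `|f r - c| <= e) -> `|jump f s| <= e + e + e.
Proof.
case=> _ hl e0 s0 los hf; rewrite /jump s0.
have /cvgrPdist_le/(_ e e0) hL := hl s s0.
have [r [lor rs hr]] : exists r, [/\ lo < r, r < s & `|leftlim f s - f r| <= e].
  apply: (@filter_ex _ s^'-); near=> r; split.
  - by near: r; exact: nbhs_left_gt.
  - by near: r; exact: nbhs_left_lt.
  - by near: r; exact: hL.
have := hf s los (lexx s); have := hf r lor (ltW rs); move: hr.
rewrite !ler_distl => /andP[? ?] /andP[? ?] /andP[? ?]; apply/andP; split; lra.
Unshelve. all: end_near.
Qed.

Lemma flat_sides_jump_le f t d e s : cadlag f -> 0 < e -> flat_sides f t d e ->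
  0 < s -> s != t -> `|s - t| < d -> `|jump f s| <= e + e + e.
Proof.
move=> hf e0 [hl hr] s0 st; rewrite ltr_distl => /andP[hs1 hs2].
case: (ltgtP s t) st => // [hst|hts] _.
- apply: (jump_le_left_osc hf e0 s0 (lo := t - d)) => [|r hr1 hr2]; first lra.
  by apply: hl; lra.
- apply: (jump_le_left_osc hf e0 s0 hts) => r hr1 hr2.
  by apply: hr; lra.
Qed.

Lemma timechange_left lam s : timechange lam -> 0 < s ->
  lam x @[x --> s^'-] --> (lam s)^'-.
Proof.
case=> l0 lmono lcont _ s0 P hP.
have lc : lam x @[x --> within `[0, +oo[ (nbhs s)] --> lam s.
  by move/subspace_continuousP: lcont; apply; rewrite /= in_itv /= andbT ltW.
have {}hP : \forall y \near lam s, y < lam s -> P y := hP.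
have : \forall x \near within `[0, +oo[ (nbhs s), lam x < lam s -> P (lam x) := lc _ hP.
rewrite near_withinE => hPlam.
suff : \forall x \near s^'-, P (lam x) by [].
rewrite near_withinE; near=> x => xs.
have x0 : 0 <= x by apply/ltW; near: x; exact: lt_nbhsr.
have : `[0, +oo[%classic x -> lam x < lam s -> P (lam x) by near: x; exact: hPlam.
by apply; [rewrite /= in_itv /= andbT | exact: lmono].
Unshelve. all: end_near.
Qed.

Lemma jump_timechange_close q f lam N e s : cadlag q -> timechange lam ->
  cvg (f x @[x --> (lam s)^'-]) -> 0 < e -> 0 < s -> s <= N ->
  (forall r, 0 <= r -> r <= N -> `|f (lam r) - q r| <= e) ->
  `|jump q s - jump f (lam s)| <= 4 * e.
Proof.
move=> [_ hlq] hlam hlf e0 s0 sN hclose.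
have ls0 : 0 < lam s by case: hlam => l0 lmono _ _; rewrite -l0 lmono.
rewrite /jump s0 ls0.
have /cvgrPdist_le/(_ e e0) hq := hlq s s0.
have /cvgrPdist_le/(_ e e0) hf : (f \o lam) x @[x --> s^'-] --> leftlim f (lam s).
  exact: cvg_comp (timechange_left hlam s0) hlf.
have [r [r0 rs hqr hfr]] : exists r, [/\ 0 <= r, r < s,
    `|leftlim q s - q r| <= e & `|leftlim f (lam s) - f (lam r)| <= e].
  apply: (@filter_ex _ s^'-); near=> r; split.
  - by near: r; exact: nbhs_left_ge.
  - by near: r; exact: nbhs_left_lt.
  - by near: r; exact: hq.
  - by near: r; exact: hf.
have := hclose s (ltW s0) sN; have := hclose r r0 (le_trans (ltW rs) sN); move: hqr hfr.
rewrite !ler_distl => /andP[? ?] /andP[? ?] /andP[? ?] /andP[? ?]; apply/andP; split; lra.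
Unshelve. all: end_near.
Qed.
End CadlagJumps.

Section StraddleJump.
Variables (R : realType) (k : nat -> nat) (p : nat -> nat -> R).
Hypothesis hp : partition_seq k p.
Variables (u v q lam : R -> R) (n : nat) (t d e N : R) (i : nat).
Hypotheses (hq : cadlag q) (hlam : timechange lam).
Hypotheses (t0 : 0 < t) (e0 : 0 < e) (hd : 0 < d <= t) (tdN : t + d <= N).
Hypotheses (hu : flat_sides u t d e) (hv : flat_sides v t d e) (hqf : flat_sides q t d e).
(* The margin d / 4 keeps every point used below inside (t - d, t + d). *)
Hypothesis hmesh :
  forall j, (j < k n)%N -> p n j <= t + d -> p n j.+1 - p n j <= d / 4.
Hypothesis hlam_id : forall s, 0 <= s -> `|lam s - s| <= d / 4.
Hypothesis hclose :
  forall s, 0 <= s -> s <= N -> `|qn k p u v n (lam s) - q s| <= e.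
Hypothesis hi : straddles k p t n i.

Let hik : (i < k n)%N. Proof. by case: hi. Qed.

Lemma straddle_bounds : t - d / 4 <= p n i < t.
Proof.
have /andP[d0 _] := hd; case: hi => _ /andP[hit hti]; rewrite hit andbT.
by have := hmesh hik (ltac:(lra)); lra.
Qed.

Lemma straddle_pos : 0 < p n i.
Proof.
case: hp => hp0 _ _ _ _; case: (posnP i) => [i0|ipos].
  by have := t0; have := hd; have := straddle_bounds; rewrite i0 hp0; lra.
by rewrite -(hp0 n) (partition_lt hp ipos (ltnW hik)).
Qed.

Lemma jump_close_atom s : 0 < s -> s <= N -> `|jump q s - atom k p u v n (lam s)| <= 4 * e.
Proof.
move=> s0 sN; have ls0 : 0 < lam s by case: hlam => l0 lmono _ _; rewrite -l0 lmono.
rewrite -jump_qn //; apply: (jump_timechange_close (N := N)) => //.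
exact: cvg_qn_left.
Qed.

Lemma incr_off_straddle_le j : (j < k n)%N -> j != i -> `|p n j - t| <= d / 4 ->
  `|incr p u v n j| <= 4 * e ^+ 2.
Proof.
move=> hj hji; rewrite ler_distl => /andP[hj1 hj2]; have /andP[d0 _] := hd.
have hjj : p n j <= p n j.+1 by exact/ltW/(partition_lt hp (ltnSn j)).
have [hi1 hi2] := andP straddle_bounds.
have side : (t - d < p n j /\ p n j.+1 < t) \/ (t <= p n j /\ p n j.+1 < t + d).
  case: (ltngtP j i) hji => // [hlt|hgt] _.
    by left; have := partition_le hp hlt (ltnW hik); split; lra.
  right; case: hi => _ /andP[_ hti].
  by have := partition_le hp hgt (ltnW hj); have := hmesh hj (ltac:(lra)); split; lra.
rewrite /incr normrM (_ : 4 * e ^+ 2 = (e + e) * (e + e)); last by rewrite expr2; lra.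
apply: ler_pM; rewrite ?normr_ge0 //.
  exact: flat_sides_incr_le hu hjj side.
exact: flat_sides_incr_le hv hjj side.
Qed.

Lemma atom_off_straddle_le x : x != p n i -> `|x - t| <= d / 4 ->
  `|atom k p u v n x| <= 4 * e ^+ 2.
Proof.
move=> hx hxt; case: (pselect (exists2 j, (j < k n)%N & p n j = x)) => [[j hj hjx]|hno].
  rewrite -hjx atom_partition //; apply: incr_off_straddle_le; rewrite ?hjx //.
  by apply: contraNneq hx => hji; rewrite -hjx hji.
rewrite atom_eq0 ?normr0 ?mulr_ge0 ?exprn_ge0 ?ltW // => j hj.
by apply/eqP => hjx; apply: hno; exists j.
Qed.

Lemma incr_straddle_le : lam t != p n i -> `|incr p u v n i| <= 7 * e.
Proof.
move=> hlt; have [l0 lmono lcont _] := hlam; have /andP[d0 dt] := hd.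
have [hi1 hi2] := andP straddle_bounds; have hi0 := straddle_pos.
have := hlam_id (ltac:(lra) : 0 <= t + d); rewrite ler_distl => /andP[ltd _].
have [a] : exists2 a, a \in `[0, t + d] & lam a = p n i.
  apply: IVT; first lra.
    by apply: continuous_subspaceW lcont => x /=; rewrite !in_itv /= => /andP[-> _].
  by rewrite l0 ge_min le_max ltW //= orbC; apply/orP; left; lra.
rewrite in_itv /= => /andP[a0 atd] hla.
have := hlam_id a0; rewrite hla ler_distl => /andP[ha1 ha2].
have apos : 0 < a.
  by rewrite lt_neqAle a0 andbT; apply: contraTneq hi0 => a_eq0; rewrite -hla -a_eq0 l0 ltxx.
have hat : a != t by apply: contraNneq hlt => <-; rewrite hla.
have := jump_close_atom apos (le_trans atd tdN); rewrite hla atom_partition //.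
have := flat_sides_jump_le hq e0 hqf apos hat (ltac:(rewrite ltr_distl; apply/andP; split; lra)).
rewrite !ler_norml => /andP[? ?] /andP[? ?]; apply/andP; split; lra.
Qed.

Lemma jump_straddle_close :
  `|jump q t - jump (qn k p u v n) (p n i)| <= 11 * e + 4 * e ^+ 2.
Proof.
have tN : t <= N by have /andP[d0 _] := hd; have := tdN; lra.
have hct := jump_close_atom t0 tN.
rewrite jump_qn ?straddle_pos // atom_partition //.
case: (eqVneq (lam t) (p n i)) => [hlt|hlt].
  move: hct; rewrite hlt atom_partition // => /le_trans; apply.
  by have := e0; rewrite expr2; nra.
have := hlam_id (ltW t0) => /(atom_off_straddle_le hlt) hatom.
have := incr_straddle_le hlt; move: hct hatom.
rewrite !ler_norml => /andP[? ?] /andP[? ?] /andP[? ?]; apply/andP; split; lra.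
Qed.
End StraddleJump.

Lemma near_jump_straddle_close (R : realType) (k : nat -> nat) (p : nat -> nat -> R)
    (idx : nat -> nat) (u v q : R -> R) (lam : nat -> R -> R) (t d e : R) :
  partition_seq k p -> (forall n, t <= p n (k n) -> straddles k p t n (idx n)) ->
  cadlag q -> (forall n, timechange (lam n)) ->
  (forall eps, 0 < eps -> \forall n \near \oo, forall s, 0 <= s -> `|lam n s - s| <= eps) ->
  (forall (N : nat) eps, 0 < eps -> \forall n \near \oo,
      forall s, 0 <= s -> s <= N%:R -> `|qn k p u v n (lam n s) - q s| <= eps) ->
  0 < t -> 0 < e -> 0 < d <= t ->
  flat_sides u t d e -> flat_sides v t d e -> flat_sides q t d e ->
  \forall n \near \oo, `|jump q t - jump (qn k p u v n) (p n (idx n))| <= 11 * e + 4 * e ^+ 2.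
Proof.
move=> hp hidx hq hlam hlam_id hclose t0 e0 hd hu hv hqf.
have /andP[d0 _] := hd; have d4 : 0 < d / 4 by lra.
have tdN : t + d <= (Num.bound (t + d))%:R by rewrite ltW // archi_boundP //; lra.
case: (hp) => _ _ _ /cvgryPge hinf hmesh; near=> n.
have htk : t <= p n (k n) by near: n; exact: hinf.
apply: (jump_straddle_close hp hq (hlam n) t0 e0 hd tdN hu hv hqf _ _ _ (hidx n htk)).
- by near: n; exact: hmesh (t + d) (d / 4) d4.
- by near: n; exact: hlam_id (d / 4) d4.
- by near: n; exact: hclose _ e e0.
Unshelve. all: end_near.
Qed.

Theorem lemma3p3 (R : realType) (k : nat -> nat) (p : nat -> nat -> R)
  (hp : partition_seq k p) (t : R) (ht : 0 < t) :
  exists tn : nat -> R, tn @ \oo --> t /\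
    forall u v : R -> R, cadlag u -> cadlag v ->
    forall q : R -> R, cadlag q -> J1cvg (qn k p u v) q ->
      (fun n => jump (qn k p u v n) (tn n)) @ \oo --> jump q t.
Proof.
have [idx hidx] := straddle_index hp ht.
exists (fun n => p n (idx n)); split; first exact: (straddle_cvg hp hidx).
move=> u v hu hv q hq [lam [hlam hlam_id hclose]]; apply/cvgrPdist_le => eps eps0.
pose e := Num.min 1 (eps / 15).
have e0 : 0 < e by rewrite lt_min ltr01 divr_gt0.
have [e1 e15] : e <= 1 /\ e <= eps / 15 by split; rewrite ge_min lexx ?orbT.
have [d [hd hud hvd hqd]] : exists d, [/\ 0 < d <= t,
    flat_sides u t d e, flat_sides v t d e & flat_sides q t d e].
  apply: (@filter_ex _ 0^'+); near=> d; split; [apply/andP; split | ..]; near: d.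
  - exact: nbhs_right_gt.
  - exact: nbhs_right_le.
  - exact: cadlag_flat_sides.
  - exact: cadlag_flat_sides.
  - exact: cadlag_flat_sides.
apply: filterS (near_jump_straddle_close hp hidx hq hlam hlam_id hclose ht e0 hd hud hvd hqd).
by move=> n /le_trans; apply; rewrite expr2; nra.
Unshelve. all: end_near.
Qed.
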